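(* Let $G=(V,E)$ be a connected finite multigraph without loops with $|V|\ge 2$, and let $f$ be an admissible function. Then there exists a cut $[S,\bar S]$ of $G$ such that $d^f_G(S,\bar S)=d^f(G)$ and such that both induced subgraphs $G[S]$ and $G[\bar S]$ are connected.
   Context: An admissible function is a function $f:[0,1]\to[0,\infty)$ that is concave and increasing on $[0,\tfrac12]$ and satisfies $f(x)=f(1-x)$ for all $x\in[0,1]$. For a graph $G=(V,E)$ and a nonempty proper subset $S\subset V$ with complement $\bar S=V\setminus S$, the cut $[S,\bar S]$ is the set of edges with one endpoint in $S$ and the other in $\bar S$; its balance is $b(S,\bar S)=\min(|S|,|\bar S|)/|V|$. Define $d^f_G(S,\bar S)=|[S,\bar S]|/f(b(S,\bar S))$ (interpreted as $+\infty$ if the denominator is $0$), and $d^f(G)=\min d^f_G(S,\bar S)$ over all cuts of $G$. $G[A]$ denotes the subgraph induced on $A\subseteq V$. *)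

From mathcomp Require Import all_boot.
From Stdlib Require Import Reals.

Set Implicit Arguments.
Unset Strict Implicit.
Unset Printing Implicit Defensive.

(* A finite multigraph is given by a finite vertex type V, a finite edge type E
   and two endpoint maps src dst : E -> V (parallel edges allowed). *)

Definition loopless (V E : finType) (src dst : E -> V) : Prop :=
  forall e : E, src e <> dst e.

Definition induced_adj (V E : finType) (src dst : E -> V) (A : {set V}) : rel V :=
  fun x y => [&& x \in A, y \in A &
     [exists e : E, ((src e == x) && (dst e == y)) || ((src e == y) && (dst e == x))]].

Definition induced_connected (V E : finType) (src dst : E -> V) (A : {set V}) : Prop :=
  forall x y, x \in A -> y \in A -> connect (induced_adj src dst A) x y.

Definition graph_connected (V E : finType) (src dst : E -> V) : Prop :=
  induced_connected src dst [set: V].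

Definition is_cut (V : finType) (S : {set V}) : Prop :=
  S != set0 /\ S != [set: V].

Definition cut_size (V E : finType) (src dst : E -> V) (S : {set V}) : nat :=
  #|[set e : E | (src e \in S) != (dst e \in S)]|.

Definition balance (V : finType) (S : {set V}) : R :=
  Rdiv (INR (minn #|S| #|~: S|)) (INR #|V|).

Definition admissible (f : R -> R) : Prop :=
  (forall x, Rle 0 x -> Rle x 1 -> Rle 0 (f x)) /\
  (forall x, Rle 0 x -> Rle x 1 -> f x = f (Rminus 1 x)) /\
  (forall x y, Rle 0 x -> Rle x y -> Rle y (Rdiv 1 2) -> Rle (f x) (f y)) /\
  (forall x y t, Rle 0 x -> Rle x (Rdiv 1 2) -> Rle 0 y -> Rle y (Rdiv 1 2) ->
     Rle 0 t -> Rle t 1 ->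
     Rle (Rplus (Rmult t (f x)) (Rmult (Rminus 1 t) (f y)))
         (f (Rplus (Rmult t x) (Rmult (Rminus 1 t) y)))).

(* d^f_G(S, ~S) as an extended real: None stands for +infinity
   (the case f(b(S,~S)) = 0). *)
Definition dfG (V E : finType) (src dst : E -> V) (f : R -> R) (S : {set V}) : option R :=
  if Req_EM_T (f (balance S)) 0 then None
  else Some (Rdiv (INR (cut_size src dst S)) (f (balance S))).

Definition ext_le (a b : option R) : Prop :=
  match a, b with
  | _, None => True
  | None, Some _ => False
  | Some x, Some y => Rle x y
  end.

Definition attains_df (V E : finType) (src dst : E -> V) (f : R -> R) (S : {set V}) : Prop :=
  is_cut S /\ forall T : {set V}, is_cut T -> ext_le (dfG src dst f S) (dfG src dst f T).

From mathcomp Require Import all_boot zify.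
From Stdlib Require Import Reals Lra Psatz Classical.

(* Among the cuts attaining d^f(G), take one, S, with the fewest cut edges.
   Concavity together with f >= 0 makes f(t)/t nonincreasing on (0,1].  If
   G[S] were disconnected, S would split into nonempty parts A and B with no
   edge between them, so c(S) = c(A) + c(B) and |S| = |A| + |B|; by the
   mediant inequality some part P satisfies c(P)/|P| <= c(S)/|S|, and then
   d^f(P) <= d^f(S) because |P| <= |S|.  Since G is connected the other part
   has a cut edge, so c(P) < c(S), contradicting the choice of S.  The same
   applies to the complement of S, as d^f is invariant under complementation. *)

Lemma Rdiv_bounds {a b : R} :
  (0 <= a)%R -> (a <= b)%R -> (0 < b)%R -> (0 <= a / b <= 1)%R.
Proof.
move=> a_ge0 le_ab b_gt0.
have invb_gt0 : (0 < / b)%R by apply: Rinv_0_lt_compat.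
have : (a / b * b = a)%R by field; lra.
rewrite /Rdiv; split; nra.
Qed.

Section AdmissibleFunction.

Context {f : R -> R}.
Hypothesis f_adm : admissible f.

Lemma admissible_ratio_half {x y : R} :
  (0 < x)%R -> (x <= y)%R -> (y <= 1/2)%R -> (x * f y <= y * f x)%R.
Proof.
move: f_adm => [f_ge0 [_ [_ f_concave]]] x_gt0 le_xy y_le.
have y_gt0 : (0 < y)%R by lra.
have [t_ge0 t_le1] := Rdiv_bounds (Rlt_le _ _ x_gt0) le_xy y_gt0.
have := f_concave y 0%R (x / y)%R ltac:(lra) y_le ltac:(lra) ltac:(lra) t_ge0 t_le1.
have f0_ge0 : (0 <= f 0)%R by apply: f_ge0; lra.
replace (x / y * y + (1 - x / y) * 0)%R with x by (field; lra).
have -> : (x * f y = y * (x / y * f y))%R by field; lra.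
move=> concave_xy; apply: Rmult_le_compat_l; nra.
Qed.

Lemma admissible_ratio {x y : R} :
  (0 < x)%R -> (x <= y)%R -> (y <= 1)%R -> (x * f y <= y * f x)%R.
Proof.
move=> x_gt0 le_xy y_le1.
have [y_le|y_gt] := Rle_or_lt y (1/2); first exact: admissible_ratio_half.
move: f_adm => [f_ge0 [f_sym [f_mono _]]].
rewrite (f_sym y); try lra.
have fx_ge0 : (0 <= f x)%R by apply: f_ge0; lra.
have [x_le|x_gt] := Rle_or_lt x (1/2).
- have [x_le'|x_gt'] := Rle_or_lt x (1 - y).
  + have := @admissible_ratio_half x (1 - y) x_gt0 x_le' ltac:(lra); nra.
  + have := f_mono (1 - y)%R x ltac:(lra) ltac:(lra) x_le; nra.
- rewrite (f_sym x); try lra.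
  have := f_mono (1 - y)%R (1 - x)%R ltac:(lra) ltac:(lra) ltac:(lra).
  have : (0 <= f (1 - x))%R by apply: f_ge0; lra.
  nra.
Qed.

Lemma INR_ratio_bounds {a n : nat} :
  0 < n -> a <= n -> (0 <= INR a / INR n <= 1)%R.
Proof.
move=> /ltP/lt_0_INR n_gt0 /leP/le_INR le_an.
exact: Rdiv_bounds (pos_INR a) le_an n_gt0.
Qed.

Lemma admissible_ratio_card {n a s : nat} :
  0 < a -> a <= s -> s <= n ->
  (INR a * f (INR s / INR n) <= INR s * f (INR a / INR n))%R.
Proof.
move=> a_gt0 le_as le_sn.
have n_gt0 : 0 < n by apply: leq_trans le_sn; apply: leq_trans le_as.
have nR_gt0 : (0 < INR n)%R by apply/lt_0_INR/ltP.
have aR_gt0 : (0 < INR a)%R by apply/lt_0_INR/ltP.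
have le_asR : (INR a <= INR s)%R by apply/le_INR/leP.
have [_ s_le1] := INR_ratio_bounds n_gt0 le_sn.
have x_gt0 : (0 < INR a / INR n)%R by apply: Rdiv_lt_0_compat.
have le_xy : (INR a / INR n <= INR s / INR n)%R.
  by apply: Rmult_le_compat_r; [apply/Rlt_le/Rinv_0_lt_compat |].
have ratio := admissible_ratio x_gt0 le_xy s_le1.
apply: (Rmult_le_reg_l (/ INR n)); first exact: Rinv_0_lt_compat.
move: ratio; rewrite /Rdiv; lra.
Qed.

Lemma f_balance (V : finType) (X : {set V}) :
  0 < #|V| -> f (balance X) = f (INR #|X| / INR #|V|).
Proof.
move: f_adm => [_ [f_sym _]] V_gt0.
rewrite /balance /minn; case: ltnP => // _.
have [X_ge0 X_le1] := INR_ratio_bounds V_gt0 (max_card X).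
have VR_gt0 : (0 < INR #|V|)%R by apply/lt_0_INR/ltP.
have cardC : INR #|~: X| = (INR #|V| - INR #|X|)%R.
  by rewrite -(cardsC X) plus_INR; ring.
by rewrite (f_sym _ X_ge0 X_le1) cardC; congr f; field; lra.
Qed.

End AdmissibleFunction.

Lemma Rdiv_le_cross a b c d :
  (0 < b)%R -> (0 < d)%R -> (a * d <= c * b)%R -> (a / b <= c / d)%R.
Proof.
move=> b_gt0 d_gt0 cross; apply: (Rmult_le_reg_r (b * d)); first nra.
have -> : (a / b * (b * d) = a * d)%R by field; lra.
have -> : (c / d * (b * d) = c * b)%R by field; lra.
exact: cross.
Qed.

Lemma ext_le_refl a : ext_le a a.
Proof. by case: a => [x|] //=; apply: Rle_refl. Qed.

Lemma ext_le_trans a b c : ext_le a b -> ext_le b c -> ext_le a c.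
Proof. by case: a => [x|]; case: b => [y|]; case: c => [z|] //=; apply: Rle_trans. Qed.

Lemma ext_le_total a b : ext_le a b \/ ext_le b a.
Proof.
case: a => [x|]; case: b => [y|] /=; auto.
by have [|/Rlt_le] := Rle_or_lt x y; [left | right].
Qed.

Lemma ext_le_argmin (T : eqType) (g : T -> option R) (s : seq T) :
  s != [::] -> exists2 m, m \in s & {in s, forall t, ext_le (g m) (g t)}.
Proof.
elim: s => [//|a [|b s] IH] _.
  by exists a; [exact: mem_head | move=> t /[!inE] /eqP ->; apply: ext_le_refl].
have [m m_in m_min] := IH isT.
have [le_am|le_ma] := ext_le_total (g a) (g m).
- exists a; first exact: mem_head.
  move=> t /[!inE] /orP[/eqP ->|t_in]; first exact: ext_le_refl.
  exact: ext_le_trans le_am (m_min t t_in).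
- exists m; first by rewrite inE m_in orbT.
  by move=> t /[!inE] /orP[/eqP ->|/m_min].
Qed.

Lemma balance_setC (V : finType) (S : {set V}) : balance (~: S) = balance S.
Proof. by rewrite /balance setCK minnC. Qed.

Lemma is_cut_setC (V : finType) (S : {set V}) : is_cut S -> is_cut (~: S).
Proof.
case=> S_neq0 S_neqT; split; [rewrite -setCT | rewrite -setC0].
all: by rewrite (inj_eq (@setC_inj _)).
Qed.

Lemma is_cut_sub {V : finType} {S X : {set V}} :
  is_cut S -> X \subset S -> X != set0 -> is_cut X.
Proof.
move=> [_ S_neqT] sXS X_neq0; split=> //.
by apply: contraNneq S_neqT => X_T; rewrite -subTset -X_T.
Qed.

Lemma mediant_le (c1 c2 s1 s2 : nat) :
  c1 * (s1 + s2) <= (c1 + c2) * s1 \/ c2 * (s1 + s2) <= (c1 + c2) * s2.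
Proof. by case: (leqP (c1 * (s1 + s2)) ((c1 + c2) * s1)) => ?; [left | right; nia]. Qed.

Section Cuts.

Context {V E : finType} (src dst : E -> V).

Lemma cut_size_setC (S : {set V}) : cut_size src dst (~: S) = cut_size src dst S.
Proof.
by apply: eq_card => e; rewrite !inE; case: (src e \in S); case: (dst e \in S).
Qed.

Lemma dfG_setC f (S : {set V}) : dfG src dst f (~: S) = dfG src dst f S.
Proof. by rewrite /dfG balance_setC cut_size_setC. Qed.

Lemma attains_df_setC {f} {S : {set V}} :
  attains_df src dst f S -> attains_df src dst f (~: S).
Proof. by case=> /is_cut_setC S_cut S_min; split=> // T /S_min; rewrite dfG_setC. Qed.

Lemma cut_size_gt0 {S : {set V}} :
  graph_connected src dst -> is_cut S -> 0 < cut_size src dst S.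
Proof.
move=> G_conn [/set0Pn[x xS]]; rewrite -subTset => /subsetPn[y _ yNS].
rewrite card_gt0.
apply: contra yNS => /eqP/setP no_cut.
have S_closed : closed (induced_adj src dst [set: V]) S.
  move=> u v /and3P[_ _ /existsP[e /orP[] /andP[/eqP <- /eqP <-]]];
  by move: (no_cut e); rewrite !inE => /negbFE/eqP.
by rewrite -(closed_connect S_closed (G_conn x y (in_setT x) (in_setT y))).
Qed.

Lemma cut_sizeD {A S : {set V}} : A \subset S ->
  (forall e, src e \in S -> dst e \in S -> (src e \in A) = (dst e \in A)) ->
  cut_size src dst S = cut_size src dst A + cut_size src dst (S :\: A).
Proof.
move=> /subsetP sAS no_cross; rewrite /cut_size -cardsUI.
suff [-> ->] : [set e | (src e \in A) != (dst e \in A)] :|: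
               [set e | (src e \in S :\: A) != (dst e \in S :\: A)] =
               [set e | (src e \in S) != (dst e \in S)] /\
               [set e | (src e \in A) != (dst e \in A)] :&:
               [set e | (src e \in S :\: A) != (dst e \in S :\: A)] = set0.
  by rewrite cards0 addn0.
have cross e : (src e \in S) && (dst e \in S) ==> ((src e \in A) == (dst e \in A)).
  by apply/implyP => /andP[sS dS]; rewrite (no_cross e sS dS).
split; apply/setP => e; rewrite !inE.
all: move: (cross e) (introT implyP (@sAS (src e))) (introT implyP (@sAS (dst e))).
all: by case: (src e \in A); case: (dst e \in A);
       case: (src e \in S); case: (dst e \in S).
Qed.

Lemma dfG_le_of_ratio {f} {P S : {set V}} : admissible f ->
  0 < #|P| -> #|P| <= #|S| ->
  cut_size src dst P * #|S| <= cut_size src dst S * #|P| ->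
  ext_le (dfG src dst f P) (dfG src dst f S).
Proof.
move=> f_adm P_gt0 le_PS le_ratio.
have le_SV : #|S| <= #|V| by apply: max_card.
have V_gt0 : 0 < #|V| by apply: leq_trans le_SV; apply: leq_trans le_PS.
have key := admissible_ratio_card f_adm P_gt0 le_PS le_SV.
have [S_ge0 S_le1] := INR_ratio_bounds V_gt0 le_SV.
have fS_ge0 := proj1 f_adm _ S_ge0 S_le1.
have PR_gt0 : (0 < INR #|P|)%R by apply/lt_0_INR/ltP.
have SR_gt0 : (0 < INR #|S|)%R by apply/lt_0_INR/ltP; apply: leq_trans le_PS.
have le_ratioR : (INR (cut_size src dst P) * INR #|S| <=
                  INR (cut_size src dst S) * INR #|P|)%R.
  by rewrite -!mult_INR; apply/le_INR/leP.
have cS_ge0 := pos_INR (cut_size src dst S).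
rewrite /dfG !(f_balance f_adm _ _ V_gt0).
move: key fS_ge0; set fS := f (INR #|S| / _)%R; set fP := f (INR #|P| / _)%R.
move=> key fS_ge0.
(* By [key], f vanishing at |P|/n forces it to vanish at |S|/n. *)
case: Req_EM_T => [fP0|fP_neq0]; case: Req_EM_T => [fS0|fS_neq0] //=; first nra.
have fS_gt0 : (0 < fS)%R by lra.
apply: Rdiv_le_cross; [nra | lra |].
apply: (Rmult_le_reg_l (INR #|S|)); nra.
Qed.

Lemma attains_df_sub {f} {S P : {set V}} :
  admissible f -> attains_df src dst f S -> P \subset S -> P != set0 ->
  cut_size src dst P * #|S| <= cut_size src dst S * #|P| ->
  attains_df src dst f P.
Proof.
move=> f_adm [S_cut S_min] sPS P_neq0 le_ratio.
split=> [|T /S_min]; first exact: is_cut_sub S_cut sPS P_neq0.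
apply: ext_le_trans; apply: (dfG_le_of_ratio f_adm) (subset_leq_card sPS) le_ratio.
by rewrite card_gt0.
Qed.

Lemma not_induced_connected_split (S : {set V}) :
  ~ induced_connected src dst S ->
  exists A : {set V}, [/\ A \subset S, A != set0, S :\: A != set0 &
    cut_size src dst S = cut_size src dst A + cut_size src dst (S :\: A)].
Proof.
move=> S_disconn.
have [x [y [xS yS nxy]]] :
    exists x y, [/\ x \in S, y \in S & ~~ connect (induced_adj src dst S) x y].
  apply: NNPP => no_pair; apply: S_disconn => x y xS yS.
  by apply/negPn/negP => nxy; apply: no_pair; exists x, y.
pose A := [set z in S | connect (induced_adj src dst S) x z].
have sAS : A \subset S by apply/subsetP => z /[!inE] /andP[].
exists A; split=> //.
- by apply/set0Pn; exists x; rewrite inE xS connect0.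
- by apply/set0Pn; exists y; rewrite !inE yS nxy.
apply: cut_sizeD sAS _ => e sS dS; rewrite !inE sS dS /=.
have adj_sd : induced_adj src dst S (src e) (dst e).
  by rewrite /induced_adj sS dS; apply/existsP; exists e; rewrite !eqxx.
have adj_ds : induced_adj src dst S (dst e) (src e).
  by rewrite /induced_adj sS dS; apply/existsP; exists e; rewrite !eqxx orbT.
by apply/idP/idP => conn_x; apply: connect_trans conn_x (connect1 _).
Qed.

Lemma attains_df_disconnected {f} {S : {set V}} :
  admissible f -> graph_connected src dst -> attains_df src dst f S ->
  ~ induced_connected src dst S ->
  exists2 S', attains_df src dst f S' & cut_size src dst S' < cut_size src dst S.
Proof.
move=> f_adm G_conn S_att /not_induced_connected_split[A [sAS A_neq0 B_neq0 cutD]].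
set B := S :\: A in B_neq0 cutD.
have sBS : B \subset S by apply: subsetDl.
have cardD : #|S| = #|A| + #|B| by rewrite -(cardsID A S) (setIidPr sAS).
have cA_gt0 := cut_size_gt0 G_conn (is_cut_sub S_att.1 sAS A_neq0).
have cB_gt0 := cut_size_gt0 G_conn (is_cut_sub S_att.1 sBS B_neq0).
have [le_ratio|le_ratio] :=
  mediant_le (cut_size src dst A) (cut_size src dst B) #|A| #|B|.
- exists A; last by lia.
  by apply: attains_df_sub f_adm S_att sAS A_neq0 _; rewrite cutD cardD.
- exists B; last by lia.
  by apply: attains_df_sub f_adm S_att sBS B_neq0 _; rewrite cutD cardD.
Qed.

Lemma attains_df_connected_sides {f} {S : {set V}} :
  admissible f -> graph_connected src dst -> attains_df src dst f S ->
  exists S', [/\ attains_df src dst f S', induced_connected src dst S'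
               & induced_connected src dst (~: S')].
Proof.
move=> f_adm G_conn S_att; have [n] := ubnP (cut_size src dst S).
elim: n S S_att => // n IH S S_att lt_cut.
have [S_conn|S_disconn] := classic (induced_connected src dst S); last first.
  have [S' S'_att lt_S'] := attains_df_disconnected f_adm G_conn S_att S_disconn.
  exact: IH S' S'_att (leq_trans lt_S' lt_cut).
have [C_conn|C_disconn] := classic (induced_connected src dst (~: S)).
  by exists S.
have [S' S'_att] :=
  attains_df_disconnected f_adm G_conn (attains_df_setC S_att) C_disconn.
by rewrite cut_size_setC => lt_S'; apply: IH S' S'_att (leq_trans lt_S' lt_cut).
Qed.

Lemma exists_attains_df f : 1 < #|V| -> exists S, attains_df src dst f S.
Proof.
move=> V_gt1; have /card_gt0P[x _] := ltnW V_gt1.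
pose cuts := [seq S <- enum {set V} | (S != set0) && (S != setT)].
have mem_cuts T : (T \in cuts) = (T != set0) && (T != setT).
  by rewrite mem_filter mem_enum andbT.
have x_cut : [set x] \in cuts.
  rewrite mem_cuts; apply/andP; split; first by apply/set0Pn; exists x; rewrite inE.
  by apply: contraTneq V_gt1 => xT; rewrite -cardsT -xT cards1.
have [|S S_in S_min] := @ext_le_argmin _ (dfG src dst f) cuts.
  by apply: contraTneq x_cut => ->.
exists S; split; first by move: S_in; rewrite mem_cuts => /andP.
by move=> T [T_neq0 T_neqT]; apply: S_min; rewrite mem_cuts T_neq0 T_neqT.
Qed.

End Cuts.

Theorem proposition2 (V E : finType) (src dst : E -> V) (f : R -> R) :
  loopless src dst ->
  graph_connected src dst ->
  2 <= #|V| ->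
  admissible f ->
  exists S : {set V},
    attains_df src dst f S /\
    induced_connected src dst S /\
    induced_connected src dst (~: S).
Proof.
(* Loops never cross a cut. *)
move=> _ G_conn V_gt1 f_adm.
have [S0 S0_att] := exists_attains_df src dst f V_gt1.
have [S [S_att S_conn C_conn]] :=
  attains_df_connected_sides src dst f_adm G_conn S0_att.
by exists S.
Qed.
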